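(* Let $n,\ell$ be positive integers, let $f:(\mathbb{R}^n,0)\to(\mathbb{R}^n,0)$ be a $C^\infty$ map-germ, and for each $i$ with $1\le i\le \ell$ let $\mu_i:(\mathbb{R}^n,0)\to\mathbb{R}$ be a $C^\infty$ function-germ. Then the map-germ $F:(\mathbb{R}^n,0)\to\mathbb{R}^{n+\ell}$ defined by \[ F=\left(f,\ \mu_1|Jf|^2,\ \ldots,\ \mu_\ell|Jf|^2\right) \] is a frontal.
   Context: All map-germs, function-germs and vector fields are $C^\infty$. For a map-germ $f:(\mathbb{R}^n,0)\to(\mathbb{R}^n,0)$, $|Jf|$ denotes the Jacobian determinant of $f$ (so $|Jf|^2$ is its square). A vector field along a map-germ $F:(\mathbb{R}^n,0)\to\mathbb{R}^{n+\ell}$ is a germ $\Phi:(\mathbb{R}^n,0)\to T\mathbb{R}^{n+\ell}$ with $\pi\circ\Phi=F$, where $\pi$ is the tangent bundle projection; write $\Phi(x)=(F(x),\phi(x))$ with $\phi(x)\in T_{F(x)}\mathbb{R}^{n+\ell}\cong\mathbb{R}^{n+\ell}$. $F$ is called a frontal if there exist vector fields $\Phi_1,\ldots,\Phi_\ell$ along $F$, $\Phi_i=(F,\phi_i)$, such that: (1) for every $i$ and every germ of vector field $\xi$ on $(\mathbb{R}^n,0)$, $\phi_i(x)\cdot dF_x(\xi(x))=0$ (Euclidean scalar product) for all $x$ near $0$; (2) $\phi_i(0)\neq 0$ for every $i$; (3) $\phi_1(0),\ldots,\phi_\ell(0)$ are linearly independent. *)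

From HB Require Import structures.
From mathcomp Require Import all_boot all_order all_algebra.
From mathcomp Require Import all_classical all_reals all_analysis.
Set Implicit Arguments. Unset Strict Implicit. Unset Printing Implicit Defensive.
Import Order.TTheory GRing.Theory Num.Theory.
Import numFieldNormedType.Exports.
Local Open Scope classical_set_scope.
Local Open Scope ring_scope.

Section Defs.
Variable R : realType.

Definition ebasis (n : nat) (i : 'I_n) : 'rV[R]_n := delta_mx 0 i.

Definition iter_partial (n : nat) (s : seq 'I_n) (g : 'rV[R]_n -> R)
  : 'rV[R]_n -> R :=
  foldr (fun i h => fun x => derive h x (ebasis i)) g s.

Definition smooth_fun_germ (n : nat) (g : 'rV[R]_n -> R) : Prop :=
  \forall x \near (0 : 'rV[R]_n),
    forall s : seq 'I_n,
      {for x, continuous (iter_partial s g)} /\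
      (forall i : 'I_n, derivable (iter_partial s g) x (ebasis i)).

Definition smooth_map_germ (n m : nat) (g : 'rV[R]_n -> 'rV[R]_m) : Prop :=
  forall j : 'I_m, smooth_fun_germ (fun x => g x ord0 j).

Definition jacdet (n : nat) (f : 'rV[R]_n -> 'rV[R]_n) (x : 'rV[R]_n) : R :=
  \det (\matrix_(i < n, j < n) derive (fun y => f y ord0 i) x (ebasis j)).

Definition dotp (m : nat) (a b : 'rV[R]_m) : R := \sum_(k < m) a ord0 k * b ord0 k.

(* F : (R^n,0) -> R^(n+l) is a frontal: there exist C^oo vector fields
   Phi_i = (F, phi_i) along F satisfying (1), (2), (3). *)
Definition frontal (n l : nat) (F : 'rV[R]_n -> 'rV[R]_(n + l)) : Prop :=
  exists phi : 'I_l -> 'rV[R]_n -> 'rV[R]_(n + l),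
    (forall i, smooth_map_germ (phi i)) /\
    (forall (i : 'I_l) (xi : 'rV[R]_n -> 'rV[R]_n), smooth_map_germ xi ->
       \forall x \near (0 : 'rV[R]_n), dotp (phi i x) ('d F x (xi x)) = 0) /\
    (forall i, phi i 0 != 0) /\
    row_free (\matrix_(i < l) phi i 0).

End Defs.

(* Write J = |Jf| and Df for the Jacobian matrix of f.  The product rule gives
   d(mu_i J^2) = J c_i with c_i = J dmu_i + 2 mu_i dJ, and Cramer's rule
   adj(Df) Df = J turns this into d(mu_i J^2) = c_i adj(Df) Df.  Hence the
   vector fields phi_i = (-c_i adj(Df), e_i) annihilate dF = (Df, d(mu J^2));
   their last l coordinates form the identity matrix, so they are linearly
   independent, and their entries are polynomials in the partial derivatives
   of f and mu, hence smooth. *)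

From HB Require Import structures.
From mathcomp Require Import all_boot all_order all_algebra.
From mathcomp Require Import all_classical all_reals all_analysis.
From mathcomp Require Import ring.
Set Implicit Arguments.
Unset Strict Implicit.
Import GRing.Theory.
Import numFieldNormedType.Exports.
Local Open Scope ring_scope.

Section SmoothAtPoint.
Variables (R : realType) (n : nat).
Local Notation V := 'rV[R]_n.
Implicit Types (g a b : V -> R) (x y : V).

Definition partial (j : 'I_n) g : V -> R := fun x => 'D_(ebasis R j) g x.

Lemma iter_partial_rcons s j g :
  iter_partial (rcons s j) g = iter_partial s (partial j g).
Proof. by rewrite /iter_partial foldr_rcons. Qed.

Definition cont_derivable g x :=
  {for x, continuous g} /\ forall j, derivable g x (ebasis R j).

Definition smooth_upto (k : nat) g x :=
  forall s : seq 'I_n, (size s <= k)%N -> cont_derivable (iter_partial s g) x.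

Definition smooth_at g x := forall k, smooth_upto k g x.

Lemma smooth_upto0 g x : smooth_upto 0 g x <-> cont_derivable g x.
Proof.
split=> [H | H [_ | j s hs]]; first exact: (H [::] isT).
  exact: H.
discriminate hs.
Qed.

Lemma smooth_uptoS k g x : smooth_upto k.+1 g x <->
  cont_derivable g x /\ forall j, smooth_upto k (partial j g) x.
Proof.
split=> [H | [H0 H] s].
  split=> [|j s Hs]; first exact: (H [::]).
  by rewrite -iter_partial_rcons; apply: H; rewrite size_rcons.
case/lastP: s => [_ //|s j]; rewrite size_rcons ltnS iter_partial_rcons.
exact: H.
Qed.

Lemma smooth_at_cont_derivable g x : smooth_at g x -> cont_derivable g x.
Proof. by move=> /(_ 0%N) /smooth_upto0. Qed.

Lemma smooth_at_partial j g x : smooth_at g x -> smooth_at (partial j g) x.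
Proof. by move=> H k; have /smooth_uptoS[_] := H k.+1; apply. Qed.

Lemma near_eq_iter_partial s a b x : (\forall y \near x, a y = b y) ->
  \forall y \near x, iter_partial s a y = iter_partial s b y.
Proof.
elim: s => [//|j s IH] /IH /near_join; apply: filterS => y Hy.
exact: near_eq_derive.
Qed.

Lemma near_eq_cont_derivable a b x : (\forall y \near x, a y = b y) ->
  cont_derivable a x -> cont_derivable b x.
Proof.
move=> E [ca da]; split=> [|j]; last exact: near_eq_derivable (da j).
rewrite /prop_for /continuous_at -(nbhs_singleton E).
exact: cvg_trans (near_eq_cvg E) ca.
Qed.

Lemma near_eq_smooth_upto k a b x : (\forall y \near x, a y = b y) ->
  smooth_upto k a x -> smooth_upto k b x.
Proof.
move=> E H s /H; apply: near_eq_cont_derivable.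
exact: near_eq_iter_partial.
Qed.

Lemma cont_derivable_cst (c : R) x : cont_derivable (fun _ => c) x.
Proof. by split=> [|j]; [exact: cst_continuous | exact: derivable_cst]. Qed.

Lemma smooth_at_cst (c : R) x : smooth_at (fun _ => c) x.
Proof.
move=> k; elim: k c => [|k IH] c.
  by apply/smooth_upto0; exact: cont_derivable_cst.
apply/smooth_uptoS; split=> [|j]; first exact: cont_derivable_cst.
have -> : partial j (fun _ => c) = fun _ => 0.
  by apply/funext => y; exact: derive_cst.
exact: IH.
Qed.

Lemma cont_derivableD a b x : cont_derivable a x -> cont_derivable b x ->
  cont_derivable (fun y => a y + b y) x.
Proof.
move=> [ca da] [cb db].
by split=> [|j]; [exact: (cvgD ca cb) | exact: derivableD].
Qed.

Lemma cont_derivableM a b x : cont_derivable a x -> cont_derivable b x ->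
  cont_derivable (fun y => a y * b y) x.
Proof.
move=> [ca da] [cb db].
by split=> [|j]; [exact: (cvgM ca cb) | exact: derivableM].
Qed.

Lemma partialD j a b x : cont_derivable a x -> cont_derivable b x ->
  partial j (fun y => a y + b y) x = partial j a x + partial j b x.
Proof. by move=> [_ da] [_ db]; exact: deriveD. Qed.

Lemma partialM j a b x : cont_derivable a x -> cont_derivable b x ->
  partial j (fun y => a y * b y) x = partial j a x * b x + a x * partial j b x.
Proof.
move=> [_ da] [_ db]; rewrite /partial (deriveM (da j) (db j)).
by rewrite addrC mulrC.
Qed.

Lemma smooth_uptoD k a b y :
  (\forall z \near y, smooth_upto k a z /\ smooth_upto k b z) ->
  smooth_upto k (fun z => a z + b z) y.
Proof.
elim: k a b y => [|k IH] a b y H.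
  have [/smooth_upto0 ha /smooth_upto0 hb] := nbhs_singleton H.
  by apply/smooth_upto0; exact: cont_derivableD.
have [/smooth_uptoS[ha _] /smooth_uptoS[hb _]] := nbhs_singleton H.
apply/smooth_uptoS; split=> [|j]; first exact: cont_derivableD.
have E : \forall z \near y,
    partial j a z + partial j b z = partial j (fun z => a z + b z) z.
  apply: filterS H => z [/smooth_uptoS[az _] /smooth_uptoS[bz _]].
  by rewrite partialD.
apply: near_eq_smooth_upto E _; apply: IH.
by apply: filterS H => z [/smooth_uptoS[_ haz] /smooth_uptoS[_ hbz]].
Qed.

Lemma smooth_atD a b y : (\forall z \near y, smooth_at a z /\ smooth_at b z) ->
  smooth_at (fun z => a z + b z) y.
Proof. by move=> H k; apply: smooth_uptoD; apply: filterS H => z [ha hb]. Qed.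

Lemma smooth_uptoM k a b y :
  (\forall z \near y, smooth_at a z /\ smooth_at b z) ->
  smooth_upto k (fun z => a z * b z) y.
Proof.
elim: k a b y => [|k IH] a b y H; have [ha hb] := nbhs_singleton H;
  have hab := cont_derivableM (smooth_at_cont_derivable ha)
                              (smooth_at_cont_derivable hb).
  by apply/smooth_upto0.
apply/smooth_uptoS; split=> [|j]; first exact: hab.
have E : \forall z \near y, partial j a z * b z + a z * partial j b z =
                           partial j (fun z => a z * b z) z.
  apply: filterS H => z [/smooth_at_cont_derivable az].
  by move/smooth_at_cont_derivable => bz; rewrite partialM.
apply: near_eq_smooth_upto E _.
apply: (smooth_uptoD (a := fun z => partial j a z * b z)).
apply: filterS (near_join H) => z Hz; split; apply: IH.
  by apply: filterS Hz => w [haw hbw]; split; first exact: smooth_at_partial.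
by apply: filterS Hz => w [haw hbw]; split; last exact: smooth_at_partial.
Qed.

Lemma smooth_atM a b y : (\forall z \near y, smooth_at a z /\ smooth_at b z) ->
  smooth_at (fun z => a z * b z) y.
Proof. by move=> H k; exact: smooth_uptoM. Qed.

End SmoothAtPoint.

Section SmoothNear.
Variables (R : realType) (n : nat) (x0 : 'rV[R]_n).
Local Notation V := 'rV[R]_n.
Implicit Types (g h : V -> R).

Definition smooth_near g := \forall x \near x0, smooth_at g x.

Definition smooth_mx_near p q (M : V -> 'M[R]_(p, q)) :=
  forall i j, smooth_near (fun x => M x i j).

Lemma eq_smooth_near g h :
  (forall x, g x = h x) -> smooth_near g -> smooth_near h.
Proof. by move=> /funext ->. Qed.

Lemma smooth_near_cst (c : R) : smooth_near (fun _ => c).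
Proof. by apply: filterE => x; exact: smooth_at_cst. Qed.

Lemma smooth_near_partial j g : smooth_near g -> smooth_near (partial j g).
Proof. by apply: filterS => x; exact: smooth_at_partial. Qed.

Lemma smooth_nearD g h : smooth_near g -> smooth_near h ->
  smooth_near (fun x => g x + h x).
Proof.
move=> hg hh; apply: filterS (near_join (filterI hg hh)) => x.
exact: smooth_atD.
Qed.

Lemma smooth_nearM g h : smooth_near g -> smooth_near h ->
  smooth_near (fun x => g x * h x).
Proof.
move=> hg hh; apply: filterS (near_join (filterI hg hh)) => x.
exact: smooth_atM.
Qed.

Lemma smooth_near_sum (I : Type) (r : seq I) (P : pred I) (F : I -> V -> R) :
  (forall i, smooth_near (F i)) ->
  smooth_near (fun x => \sum_(i <- r | P i) F i x).
Proof.
move=> hF; elim: r => [|i r IH].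
  by apply: eq_smooth_near (smooth_near_cst 0) => x; rewrite big_nil.
case Pi: (P i); last by apply: eq_smooth_near IH => x; rewrite big_cons Pi.
by apply: eq_smooth_near (smooth_nearD (hF i) IH) => x; rewrite big_cons Pi.
Qed.

Lemma smooth_near_prod (I : Type) (r : seq I) (P : pred I) (F : I -> V -> R) :
  (forall i, smooth_near (F i)) ->
  smooth_near (fun x => \prod_(i <- r | P i) F i x).
Proof.
move=> hF; elim: r => [|i r IH].
  by apply: eq_smooth_near (smooth_near_cst 1) => x; rewrite big_nil.
case Pi: (P i); last by apply: eq_smooth_near IH => x; rewrite big_cons Pi.
by apply: eq_smooth_near (smooth_nearM (hF i) IH) => x; rewrite big_cons Pi.
Qed.

Lemma smooth_near_det m (M : V -> 'M[R]_m) :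
  smooth_mx_near M -> smooth_near (fun x => \det (M x)).
Proof.
move=> hM; apply: smooth_near_sum => s.
apply: smooth_nearM; first exact: smooth_near_cst.
by apply: smooth_near_prod => i; exact: hM.
Qed.

Lemma smooth_mx_near_adj m (M : V -> 'M[R]_m) :
  smooth_mx_near M -> smooth_mx_near (fun x => \adj (M x)).
Proof.
move=> hM i j.
have hcof : smooth_near (fun x => cofactor (M x) j i).
  apply: smooth_nearM; first exact: smooth_near_cst.
  apply: smooth_near_det => a b.
  by apply: eq_smooth_near (hM _ _) => x; rewrite !mxE.
by apply: eq_smooth_near hcof => x; rewrite mxE.
Qed.

Lemma smooth_mx_nearN p q (M : V -> 'M[R]_(p, q)) :
  smooth_mx_near M -> smooth_mx_near (fun x => - M x).
Proof.
move=> hM i j.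
apply: eq_smooth_near (smooth_nearM (smooth_near_cst (-1)) (hM i j)) => x.
by rewrite mxE mulN1r.
Qed.

Lemma smooth_mx_nearM p q r (A : V -> 'M[R]_(p, q)) (B : V -> 'M[R]_(q, r)) :
  smooth_mx_near A -> smooth_mx_near B -> smooth_mx_near (fun x => A x *m B x).
Proof.
move=> hA hB i k.
have hsum : smooth_near (fun x => \sum_j A x i j * B x j k).
  by apply: smooth_near_sum => j; exact: smooth_nearM.
by apply: eq_smooth_near hsum => x; rewrite mxE.
Qed.

Definition partials_mx m (F : V -> 'rV[R]_m) (x : V) : 'M[R]_(m, n) :=
  \matrix_(k, j) partial j (fun y => F y 0 k) x.

Lemma smooth_mx_near_partials m (F : V -> 'rV[R]_m) :
  smooth_mx_near F -> smooth_mx_near (partials_mx F).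
Proof.
move=> hF k j; apply: eq_smooth_near (smooth_near_partial j (hF 0 k)) => x.
by rewrite mxE.
Qed.

End SmoothNear.

Lemma smooth_fun_germE (R : realType) (n : nat) (g : 'rV[R]_n -> R) :
  smooth_fun_germ g <-> smooth_near 0 g.
Proof.
split; apply: filterS => x H; first by move=> k s _; exact: H.
by move=> s; exact: (H (size s) s (leqnn _)).
Qed.

Lemma smooth_map_germE (R : realType) (n m : nat) (F : 'rV[R]_n -> 'rV[R]_m) :
  smooth_map_germ F <-> smooth_mx_near 0 F.
Proof.
split=> [hF i j | hF j]; apply/smooth_fun_germE; last exact: hF.
by rewrite (ord1 i); exact: hF.
Qed.

Lemma not_differentiable_diff (R : realType) (V W : normedModType R)
    (F : V -> W) (x : V) :
  ~ differentiable F x -> 'd F x = 0 :> (V -> W).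
Proof.
move=> nd; rewrite /diff; case: xgetP => [df dfE Pdf | //].
by exfalso; apply/nd/diffP; rewrite /diff -dfE.
Qed.

Section Dotp.
Variables (R : realType) (m : nat).
Implicit Types p : 'rV[R]_m.

Lemma dotp_sumr p k (c : 'I_k -> R) (w : 'I_k -> 'rV[R]_m) :
  dotp p (\sum_(j < k) c j *: w j) = \sum_(j < k) c j * dotp p (w j).
Proof.
rewrite /dotp; under eq_bigr do rewrite summxE big_distrr /=.
rewrite exchange_big /=; apply: eq_bigr => j _.
by rewrite big_distrr /=; apply: eq_bigr => i _; rewrite mxE mulrCA.
Qed.

Lemma dotp_row_col q r (A : 'M[R]_(q, m)) (B : 'M[R]_(m, r)) i j :
  dotp (row i A) (col j B)^T = (A *m B) i j.
Proof. by rewrite /dotp mxE; apply: eq_bigr => k _; rewrite !mxE. Qed.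

Lemma dotp_diff_eq0 n (F : 'rV[R]_n -> 'rV[R]_m) (x v : 'rV[R]_n) p :
  (forall j, derivable F x (ebasis R j) -> dotp p ('D_(ebasis R j) F x) = 0) ->
  dotp p ('d F x v) = 0.
Proof.
move=> hF; have [dF|nd] := pselect (differentiable F x); last first.
  rewrite (not_differentiable_diff nd) /dotp big1 // => k _.
  by rewrite mxE mulr0.
rewrite [v]row_sum_delta linear_sum; under eq_bigr do rewrite linearZ.
rewrite dotp_sumr big1 // => j _.
by rewrite -deriveE // hF ?mulr0 //; exact: diff_derivable.
Qed.

End Dotp.

Section PartialsMatrix.
Variables (R : realType) (n : nat).
Local Notation V := 'rV[R]_n.

Lemma derive_partials m (F : V -> 'rV[R]_m) x j : derivable F x (ebasis R j) ->
  'D_(ebasis R j) F x = (col j (partials_mx F x))^T.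
Proof.
move=> dF; rewrite derive_mx //.
by apply/matrixP => i k; rewrite (ord1 i) !mxE.
Qed.

Lemma partials_mx_row_mx p q (f : V -> 'rV[R]_p) (g : V -> 'rV[R]_q) x :
  partials_mx (fun y => row_mx (f y) (g y)) x =
  col_mx (partials_mx f x) (partials_mx g x).
Proof.
apply/matrixP => k j; rewrite mxE; case: (split_ordP k) => k' ->.
  rewrite col_mxEu mxE; congr (partial _ _ _).
  by apply/funext => y; rewrite row_mxEl.
rewrite col_mxEd mxE; congr (partial _ _ _).
by apply/funext => y; rewrite row_mxEr.
Qed.

Lemma partial_mul_sqr (mu J : V -> R) x j :
  cont_derivable mu x -> cont_derivable J x ->
  partial j (fun y => mu y * J y ^+ 2) x =
  J x * (J x * partial j mu x + 2 * mu x * partial j J x).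
Proof.
move=> hmu hJ.
have -> : (fun y => mu y * J y ^+ 2) = fun y => mu y * (J y * J y).
  by apply/funext => y; rewrite expr2.
rewrite (partialM j hmu (cont_derivableM hJ hJ)) (partialM j hJ hJ).
ring.
Qed.

End PartialsMatrix.

Lemma frontal_row_mx (R : realType) (n l : nat) (f : 'rV[R]_n -> 'rV[R]_n)
    (g : 'rV[R]_n -> 'rV[R]_l) (A : 'rV[R]_n -> 'M[R]_(l, n)) :
  smooth_mx_near 0 A ->
  (\forall x \near (0 : 'rV[R]_n),
     A x *m partials_mx f x + partials_mx g x = 0) ->
  frontal (fun x => row_mx (f x) (g x)).
Proof.
move=> hA hfg; exists (fun i x => row i (row_mx (A x) 1%:M)).
split; [|split; [|split]].
- move=> i; apply/smooth_map_germE => i0 k; case: (split_ordP k) => k' ->.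
    by apply: eq_smooth_near (hA i k') => x; rewrite mxE row_mxEl.
  apply: eq_smooth_near (smooth_near_cst 0 (1%:M i k')) => x.
  by rewrite [RHS]mxE row_mxEr.
- move=> i xi _; apply: filterS hfg => x hx; apply: dotp_diff_eq0 => j dF.
  rewrite derive_partials // dotp_row_col partials_mx_row_mx mul_row_col.
  by rewrite mul1mx hx mxE.
- move=> i; apply/eqP => /rowP/(_ (rshift n i)).
  by rewrite mxE row_mxEr !mxE eqxx => /eqP; rewrite oner_eq0.
have -> : \matrix_(i < l) row i (row_mx (A 0) 1%:M) = row_mx (A 0) 1%:M.
  by apply/matrixP => i k; rewrite !mxE.
apply/row_freeP; exists (col_mx 0 1%:M).
by rewrite mul_row_col mulmx0 mul1mx add0r.
Qed.

Theorem theorem1 (R : realType) (n l : nat) (hn : (0 < n)%N) (hl : (0 < l)%N)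
  (f : 'rV[R]_n -> 'rV[R]_n) (mu : 'I_l -> 'rV[R]_n -> R) :
  smooth_map_germ f -> f 0 = 0 ->
  (forall i : 'I_l, smooth_fun_germ (mu i)) ->
  frontal (fun x : 'rV[R]_n =>
    row_mx (f x) (\row_(i < l) (mu i x * jacdet f x ^+ 2))).
Proof.
move=> /smooth_map_germE hf _ hmu; pose J := jacdet f.
have JE x : J x = \det (partials_mx f x) by [].
have hJ : smooth_near 0 J := smooth_near_det (smooth_mx_near_partials hf).
have {}hmu i : smooth_near 0 (mu i) by apply/smooth_fun_germE.
pose C x := \matrix_(i < l, j < n)
  (J x * partial j (mu i) x + 2 * mu i x * partial j J x).
have hC : smooth_mx_near 0 C.
  move=> i j.
  have hCij : smooth_near 0
      (fun x => J x * partial j (mu i) x + 2 * mu i x * partial j J x).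
    apply: smooth_nearD; apply: smooth_nearM.
    - exact: hJ.
    - exact: (smooth_near_partial j (hmu i)).
    - exact: (smooth_nearM (smooth_near_cst 0 2) (hmu i)).
    - exact: (smooth_near_partial j hJ).
  by apply: eq_smooth_near hCij => x; rewrite mxE.
apply: (frontal_row_mx (A := fun x => - (C x *m \adj (partials_mx f x)))).
  apply/smooth_mx_nearN/smooth_mx_nearM => //.
  exact/smooth_mx_near_adj/smooth_mx_near_partials.
have : \forall x \near (0 : 'rV[R]_n),
    smooth_at J x /\ forall i, smooth_at (mu i) x.
  exact: filterI hJ
    (@filter_forall _ _ (fun i x => smooth_at (mu i) x) _ _ hmu).
apply: filterS => x [/smooth_at_cont_derivable dJ dmu].
rewrite mulNmx -mulmxA mul_adj_mx -JE mul_mx_scalar.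
suff -> : partials_mx (fun y => \row_i (mu i y * J y ^+ 2)) x = J x *: C x.
  by rewrite addNr.
apply/matrixP => i j.
rewrite 3!mxE -(partial_mul_sqr j (smooth_at_cont_derivable (dmu i)) dJ).
by congr (partial _ _ _); apply/funext => y; rewrite mxE.
Qed.
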